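(* Let $M$ be a simple binary matroid of rank $r+1$. Then $\operatorname{si}(M/e)\cong PG(r-1,2)$ for all $e\in E(M)$ if and only if $M$ is isomorphic to the matroid obtained from $PG(r,2)$ by deleting the elements of a rank-$(r-i)$ flat, for some $i\in\{0,1,\dots,r\}$.
   Context: $\operatorname{si}$ denotes simplification. $PG(r,2)$ is the binary projective geometry of rank $r+1$; the matroid obtained by deleting a rank-$(r-i)$ flat from it does not depend on the choice of that flat (the rank-$0$ flat is empty). *)

From HB Require Import structures.
From mathcomp Require Import all_boot all_order all_algebra.
Set Implicit Arguments. Unset Strict Implicit. Unset Printing Implicit Defensive.
Import GRing.Theory.

Local Open Scope nat_scope.

(* A (raw) finite set system with a rank function: the ground set is a
   finite subset of a finType T, the rank function is only meaningful on
   subsets of the ground set. *)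
Record matroid (T : finType) := Matroid {
  ground : {set T};
  rk : {set T} -> nat }.

Definition is_matroid (T : finType) (M : matroid T) : Prop :=
  [/\ forall X : {set T}, X \subset ground M -> rk M X <= #|X|,
      forall X Y : {set T}, X \subset Y -> Y \subset ground M -> rk M X <= rk M Y &
      forall X Y : {set T}, X \subset ground M -> Y \subset ground M ->
        rk M (X :|: Y) + rk M (X :&: Y) <= rk M X + rk M Y].

Definition span_rank (n : nat) (X : {set 'rV['F_2]_n}) : nat :=
  \rank (\big[addsmx/(0 : 'M['F_2]_n)%R]_(v in X) <<v>>%MS).

Definition binary (T : finType) (M : matroid T) : Prop :=
  exists n (f : T -> 'rV['F_2]_n),
    forall X : {set T}, X \subset ground M -> rk M X = \rank (\big[addsmx/(0 : 'M['F_2]_n)%R]_(x in X) <<f x>>%MS).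

Definition loop (T : finType) (M : matroid T) (x : T) : bool :=
  rk M [set x] == 0.

Definition parallel (T : finType) (M : matroid T) (x y : T) : bool :=
  [&& x \in ground M, y \in ground M, ~~ loop M x, ~~ loop M y &
      rk M [set x; y] == 1].

Definition simple (T : finType) (M : matroid T) : Prop :=
  (forall x, x \in ground M -> rk M [set x] = 1) /\
  (forall x y, x \in ground M -> y \in ground M -> x != y ->
     rk M [set x; y] = 2).

Definition restrict (T : finType) (M : matroid T) (S : {set T}) : matroid T :=
  Matroid (S :&: ground M) (rk M).

Definition contract (T : finType) (M : matroid T) (e : T) : matroid T :=
  Matroid (ground M :\ e) (fun X => rk M (e |: X) - rk M [set e]).

(* Simplification: delete loops and keep one (the enum_rank-least)
   representative of each parallel class. *)
Definition si_set (T : finType) (M : matroid T) : {set T} :=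
  [set x in ground M | ~~ loop M x &&
     [forall y, parallel M x y ==> (enum_rank x <= enum_rank y)]].

Definition si (T : finType) (M : matroid T) : matroid T :=
  restrict M (si_set M).

Definition iso (T T' : finType) (M : matroid T) (N : matroid T') : Prop :=
  exists phi : T -> T',
    [/\ {in ground M &, injective phi},
        phi @: ground M = ground N &
        forall X : {set T}, X \subset ground M -> rk N (phi @: X) = rk M X].

(* The binary projective geometry of rank n, i.e. PG(n-1,2):
   the vector matroid of all nonzero vectors of GF(2)^n. *)
Definition PGr (n : nat) : matroid 'rV['F_2]_n :=
  Matroid [set v : 'rV['F_2]_n | v != 0%R] (@span_rank n).

Definition flat (T : finType) (M : matroid T) (F : {set T}) : Prop :=
  F \subset ground M /\
  forall x, x \in ground M -> x \notin F -> rk M F < rk M (x |: F).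

(* Represent M injectively by a set S of nonzero vectors of GF(2)^(r+1).  Contracting e
   amounts to projecting along the line spanned by u = g e; the points of si(M/e) are the
   cosets {v, v + u} that meet S, so si(M/e) is PG(r-1,2) iff every such coset meets S.
   Asked for all u in S, this says that the complement F of S in PG(r,2) is closed under
   sums of distinct points, i.e. that F is a flat; F is proper since S is nonempty, so its
   rank is r - i for some i <= r. *)

From mathcomp Require Import all_boot all_order all_algebra.
Set Implicit Arguments. Unset Strict Implicit. Unset Printing Implicit Defensive.
Import GRing.Theory.
Local Open Scope ring_scope.

Section Span.
Variables (K : fieldType) (T : finType).

Definition span_mx n (h : T -> 'rV[K]_n) (X : {set T}) : 'M[K]_n :=
  (\sum_(x in X) <<h x>>)%MS.

Variables (n : nat) (h : T -> 'rV[K]_n).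
Implicit Types X : {set T}.

Lemma span_mx_set1 x : span_mx h [set x] = <<h x>>%MS.
Proof. by rewrite /span_mx big_set1. Qed.

Lemma span_mx_setU1 x X : x \notin X -> span_mx h (x |: X) = (<<h x>> + span_mx h X)%MS.
Proof. by move=> xX; rewrite /span_mx big_setU1. Qed.

Lemma span_mx_sup x X : x \in X -> (h x <= span_mx h X)%MS.
Proof. by move=> xX; rewrite /span_mx (sumsmx_sup x) ?genmxE. Qed.

Lemma span_mx_sub m X (W : 'M_(m, n)) :
  {in X, forall x, h x <= W}%MS -> (span_mx h X <= W)%MS.
Proof. by move=> hW; apply/sumsmx_subP => x xX; rewrite genmxE hW. Qed.

Lemma eq_span_mx (h' : T -> 'rV[K]_n) X : {in X, h =1 h'} -> span_mx h X = span_mx h' X.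
Proof. by move=> eq_h; apply: eq_bigr => x /eq_h ->. Qed.

Lemma span_mxMr p (B : 'M[K]_(n, p)) X :
  (span_mx (fun x => h x *m B) X :=: span_mx h X *m B)%MS.
Proof.
apply/eqmx_sym/(eqmx_trans (sumsmxMr_gen _ _ _)).
by rewrite (eq_bigr (fun x => <<h x *m B>>%MS)) // => x _; apply/eq_genmx/eqmxMr/genmxE.
Qed.

End Span.

Lemma span_mx_imset (K : finFieldType) (T : finType) n (h : T -> 'rV[K]_n) (X : {set T}) :
  {in X &, injective h} -> span_mx id (h @: X) = span_mx h X.
Proof. by move=> inj_h; rewrite /span_mx big_imset. Qed.

Definition represents (K : fieldType) (T : finType) (M : matroid T) n (g : T -> 'rV[K]_n) :=
  forall X : {set T}, X \subset ground M -> rk M X = \rank (span_mx g X).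

Lemma kermx_eq (K : fieldType) m n p (A : 'M[K]_(m, n)) (U : 'M[K]_(p, m)) :
  (forall v : 'rV_m, (v *m A == 0) = (v <= U)%MS) -> (kermx A :=: U)%MS.
Proof.
move=> kerA; apply/eqmxP/andP; split.
  by apply/row_subP => i; rewrite -kerA -row_mul mulmx_ker row0.
by apply/row_subP => i; apply/sub_kermxP/eqP; rewrite kerA row_sub.
Qed.

Section Representations.
Variables (K : fieldType) (T : finType) (M : matroid T).

Lemma represents_in_rank_dim n (f : T -> 'rV[K]_n) k :
  represents M f -> rk M (ground M) = k -> exists g : T -> 'rV[K]_k, represents M g.
Proof.
move=> repf rkM; set A := span_mx f (ground M).
have rkA : \rank A = k by rewrite -rkM repf.
have f_in x : x \in ground M -> (f x <= row_base A)%MS.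
  by rewrite eq_row_base; apply: span_mx_sup.
move: (row_base A) (row_base_free A) f_in; rewrite rkA => B freeB f_in.
exists (fun x => f x *m pinvmx B) => X sXM.
rewrite repf //; have -> : span_mx f X = span_mx (fun x => f x *m pinvmx B *m B) X.
  by apply: eq_span_mx => x xX; rewrite mulmxKpV // f_in // (subsetP sXM).
by rewrite (span_mxMr (fun x => f x *m pinvmx B)) mxrankMfree.
Qed.

Variables (n : nat) (g : T -> 'rV[K]_n).
Hypotheses (repg : represents M g) (simpleM : simple M).

Lemma represents_simple_neq0 x : x \in ground M -> g x != 0.
Proof.
move=> xM; have := simpleM.1 x xM.
by rewrite repg ?sub1set // span_mx_set1 genmxE rank_rV; case: (g x != 0).
Qed.

Lemma represents_simple_inj : {in ground M &, injective g}.
Proof.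
move=> x y xM yM gxy; apply/eqP/contraT => neq_xy.
have := simpleM.2 x y xM yM neq_xy; rewrite repg; last by rewrite subUset !sub1set xM yM.
have sub_gx : (span_mx g [set x; y] <= g x)%MS.
  by apply: span_mx_sub => z; rewrite !inE => /orP[] /eqP ->; rewrite ?gxy.
by move: (mxrankS sub_gx); rewrite rank_rV represents_simple_neq0 // => /[swap] ->.
Qed.

End Representations.

Lemma exists_quotient_by_line (K : fieldType) k (u : 'rV[K]_k.+1) :
  u != 0 -> exists L : 'M[K]_(k.+1, k), (kermx L :=: u)%MS /\ row_full L.
Proof.
move=> u_neq0; set C := cokermx u.
have rkC : \rank C = k by rewrite mxrank_coker rank_rV u_neq0 subn1.
have kerC (v : 'rV_k.+1) : (v *m col_base C == 0) = (v <= u)%MS.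
  by rewrite submxE -(mulmx_free_eq0 _ (row_base_free C)) -mulmxA mulmx_base.
move: (col_base C) (col_base_full C) kerC; rewrite rkC => L fullL kerL.
by exists L; split; first exact: kermx_eq.
Qed.

Section Contraction.
Variables (K : fieldType) (T : finType) (M : matroid T) (r : nat) (g : T -> 'rV[K]_r.+1).
Hypotheses (repg : represents M g) (simpleM : simple M).
Variables (e : T) (L : 'M[K]_(r.+1, r)).
Hypotheses (eM : e \in ground M) (kerL : (kermx L :=: g e)%MS).

Lemma represents_contract : represents (contract M e) (fun x => g x *m L).
Proof.
move=> X; rewrite /= subsetD1 => /andP[sXM eX].
have ge_neq0 := represents_simple_neq0 repg simpleM eM.
rewrite !repg ?sub1set ?subUset ?sub1set ?eM // span_mx_set1 genmxE rank_rV ge_neq0.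
rewrite span_mx_setU1 // (span_mxMr g L).
set W := (<<g e>> + span_mx g X)%MS.
have geL0 : g e *m L = 0 by apply/sub_kermxP; rewrite kerL.
have /capmx_idPr capW : (kermx L <= W)%MS by rewrite kerL -{1}(genmxE (g e)) addsmxSl.
have WL : (W *m L :=: span_mx g X *m L)%MS.
  apply: eqmx_trans (addsmxMr _ _ _) _; apply: eqmx_trans _ (adds0mx 1 _).
  apply: adds_eqmx => //; apply: eqmx_trans (eqmxMr L (genmxE (g e))) _.
  by rewrite geL0.
by rewrite -(mxrank_mul_ker W L) capW kerL rank_rV ge_neq0 WL addnK.
Qed.

End Contraction.

Section BinaryVectors.
Variables (m n : nat).
Implicit Types (A B : 'M['F_2]_(m, n)) (a b : 'rV['F_2]_n).

Lemma addmx_F2 A : A + A = 0.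
Proof.
have two0 : (2%:R : 'F_2) = 0 by apply: val_inj.
by rewrite -mulr2n -scaler_nat two0 scale0r.
Qed.

Lemma oppmx_F2 A : - A = A.
Proof. by apply: addr0_eq; rewrite addmx_F2. Qed.

Lemma addmx_eq0_F2 A B : (A + B == 0) = (A == B).
Proof. by rewrite -[B in A + B]oppmx_F2 subr_eq0. Qed.

Lemma addKmx_F2 A B : A + (A + B) = B.
Proof. by rewrite -{1}[A]oppmx_F2 addKr. Qed.

Lemma sub_rV_F2 a b : (a <= b)%MS = (a == 0) || (a == b).
Proof.
apply/idP/orP => [/submxP[k ->] | [] /eqP ->]; rewrite ?sub0mx ?submx_refl //.
rewrite [k]mx11_scalar mul_scalar_mx.
have [->|->] : k 0 0 = 0 \/ k 0 0 = 1.
  by case: (k 0 0) => [[|[|i]]] // lti; [left | right]; apply: val_inj.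
  by left; rewrite scale0r.
by right; rewrite scale1r.
Qed.

End BinaryVectors.

Lemma rk_PGr n (X : {set 'rV['F_2]_n}) : rk (PGr n) X = \rank (span_mx id X).
Proof. by []. Qed.

Section Simplification.
Variables (T : finType) (N : matroid T) (r : nat) (h : T -> 'rV['F_2]_r).
Hypotheses (repN : represents N h) (h_neq0 : {in ground N, forall x, h x != 0}).

Lemma represents_rk1 x : x \in ground N -> rk N [set x] = 1%N.
Proof. by move=> xN; rewrite repN ?sub1set // span_mx_set1 genmxE rank_rV h_neq0. Qed.

Lemma parallelE x y : x \in ground N -> y \in ground N -> parallel N x y = (h x == h y).
Proof.
move=> xN yN; rewrite /parallel /loop !represents_rk1 // xN yN /=.
rewrite repN ?subUset ?sub1set ?xN ?yN //; set P := span_mx h [set x; y].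
have hxP : (h x <= P)%MS by apply: span_mx_sup; rewrite !inE eqxx.
have hyP : (h y <= P)%MS by apply: span_mx_sup; rewrite !inE eqxx orbT.
apply/eqP/eqP => [rkP | hxy].
  have Phx : (P <= h x)%MS by rewrite -(mxrank_leqif_sup hxP).2 rank_rV h_neq0 ?rkP.
  by move: (submx_trans hyP Phx); rewrite sub_rV_F2 (negPf (h_neq0 yN)) => /eqP.
have Phx : (P <= h x)%MS.
  by apply: span_mx_sub => z; rewrite !inE => /orP[] /eqP ->; rewrite ?hxy.
by rewrite (eqmx_rank (_ : P == h x)%MS) ?rank_rV ?h_neq0 // Phx.
Qed.

Lemma si_injective : {in ground (si N) &, injective h}.
Proof.
move=> x y; rewrite !inE => /andP[/and3P[xN _ /forallP minx] _].
move=> /andP[/and3P[yN _ /forallP miny] _] hxy.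
apply/enum_rank_inj/val_inj/eqP; rewrite eqn_leq.
by rewrite (implyP (minx y)) ?(implyP (miny x)) ?parallelE ?hxy.
Qed.

Lemma si_image : h @: ground (si N) = h @: ground N.
Proof.
apply/eqP; rewrite eqEsubset imsetS ?subsetIr //=.
apply/subsetP => _ /imsetP[x xN ->].
pose P z := (z \in ground N) && (h z == h x).
have Px : P x by rewrite /P xN eqxx.
case: (arg_minnP (fun z => enum_rank z : nat) Px) => y /andP[yN /eqP hyx] miny.
apply/imsetP; exists y => //; rewrite !inE yN /loop represents_rk1 //= andbT.
apply/forallP => z; apply/implyP => yz.
have zN : z \in ground N by case/and5P: yz.
by apply: miny; rewrite /P zN -hyx eq_sym -parallelE.
Qed.

Lemma iso_si_PGr : iso (si N) (PGr r) <-> h @: ground N = ground (PGr r).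
Proof.
split=> [[phi [phi_inj phi_im _]] | himg].
  apply/eqP; rewrite eqEcard; apply/andP; split.
    by apply/subsetP => _ /imsetP[x xN ->]; rewrite inE h_neq0.
  by rewrite -si_image -phi_im !card_in_imset //; apply: si_injective.
exists h; split; [exact: si_injective | by rewrite si_image |].
move=> X sX; have sXN : X \subset ground N by apply: subset_trans sX (subsetIr _ _).
rewrite rk_PGr span_mx_imset ?repN // => x y xX yX.
by apply: si_injective; apply: (subsetP sX).
Qed.

End Simplification.

Lemma iso_si_contract_PGrP (T : finType) (M : matroid T) r (g : T -> 'rV['F_2]_r.+1) e :
  represents M g -> simple M -> e \in ground M ->
  iso (si (contract M e)) (PGr r) <->
  (forall v, v != 0 -> v != g e -> v \in g @: ground M \/ v + g e \in g @: ground M).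
Proof.
move=> repg simpleM eM.
(* L maps onto GF(2)^r with kernel {0, g e}: its fibres are the cosets {v, v + g e}. *)
have [L [kerL fullL]] := exists_quotient_by_line (represents_simple_neq0 repg simpleM eM).
have kerLE v : (v *m L == 0) = (v == 0) || (v == g e) by rewrite -sub_kermx kerL sub_rV_F2.
have gL_neq0 x : x \in ground (contract M e) -> g x *m L != 0.
  rewrite !inE kerLE negb_or => /andP[xe xM].
  rewrite (represents_simple_neq0 repg simpleM xM) /=.
  by apply: contra xe => /eqP/(represents_simple_inj repg simpleM xM eM) ->.
apply: iff_trans (iso_si_PGr (represents_contract repg simpleM eM kerL) gL_neq0) _.
split=> [img_gL v v0 ve | cover].
  have : v *m L \in ground (PGr r) by rewrite inE kerLE negb_or v0.
  rewrite -img_gL => /imsetP[x /setD1P[_ xM] gxL].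
  have : (g x + v) *m L == 0 by rewrite mulmxDl gxL addmx_F2.
  rewrite kerLE addmx_eq0_F2 => /orP[/eqP <- | /eqP <-]; first by left; apply: imset_f.
  by right; rewrite addrCA addmx_F2 addr0; apply: imset_f.
apply/eqP; rewrite eqEsubset; apply/andP; split.
  by apply/subsetP => _ /imsetP[x xC ->]; rewrite inE gL_neq0.
apply/subsetP => w; rewrite inE => w0; set v := w *m pinvmx L.
have vL : v *m L = w by rewrite mulmxKpV // submx_full.
have := kerLE v; rewrite vL (negPf w0) => /esym/norP[v0 ve].
have gxL x : x \in ground M -> g x *m L = w -> w \in (fun x => g x *m L) @: (ground M :\ e).
  move=> xM gxw; apply/imsetP; exists x => //; rewrite !inE xM andbT.
  by apply: contraNneq w0 => xe; rewrite -gxw kerLE xe eqxx orbT.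
case: (cover v v0 ve) => /imsetP[x xM gx]; apply: (gxL x xM).
  by rewrite -gx.
by rewrite -gx mulmxDl (_ : g e *m L = 0) ?addr0 //; apply/eqP; rewrite kerLE eqxx orbT.
Qed.

Definition sum_closed n (F : {set 'rV['F_2]_n}) := {in F &, forall v w, v != w -> v + w \in F}.

Lemma complement_sum_closedP n (S : {set 'rV['F_2]_n}) : 0 \notin S ->
  (forall u, u \in S -> forall v, v != 0 -> v != u -> v \in S \/ v + u \in S) <->
  sum_closed (ground (PGr n) :\: S).
Proof.
move=> S0; split=> [cover v w | closedF u uS v v0 vu].
  rewrite !inE => /andP[vS v0] /andP[wS w0] vw; rewrite addmx_eq0_F2 vw andbT.
  apply/negP => vwS; have : v != v + w by rewrite eq_sym -subr_eq0 addrAC subrr add0r.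
  by move=> /(cover _ vwS v v0)[]; rewrite ?(negPf vS) // addKmx_F2 (negPf wS).
have u0 : u != 0 by apply: contraNneq S0 => <-.
have [vS | vS] := boolP (v \in S); first by left.
have [vuS | vuS] := boolP (v + u \in S); first by right.
have vF : v \in ground (PGr n) :\: S by rewrite !inE vS.
have vuF : v + u \in ground (PGr n) :\: S by rewrite !inE vuS addmx_eq0_F2.
have v_vu : v != v + u by rewrite eq_sym -subr_eq0 addrAC subrr add0r.
by have := closedF _ _ vF vuF v_vu; rewrite addKmx_F2 inE uS.
Qed.

Lemma sub_span_sum_closed n (F : {set 'rV['F_2]_n}) v : sum_closed F ->
  (v <= span_mx id F)%MS = (v == 0) || (v \in F).
Proof.
move=> closedF; apply/idP/orP => [|[/eqP -> | vF]];
  [| exact: sub0mx | exact: (span_mx_sup id)].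
rewrite /span_mx; elim/big_ind: _ v => [v | W1 W2 IH1 IH2 v | x xF v].
- by rewrite submx0 => ->; left.
- case/sub_addsmxP=> [[u1 u2] /= ->].
  have [/eqP -> | w1F] := IH1 _ (submxMl u1 W1).
    by rewrite add0r; apply/IH2/submxMl.
  have [/eqP -> | w2F] := IH2 _ (submxMl u2 W2); first by rewrite addr0; right.
  have [-> | w12] := eqVneq (u1 *m W1) (u2 *m W2); first by rewrite addmx_F2; left.
  by right; apply: closedF.
- by rewrite genmxE sub_rV_F2 => /orP[-> | /eqP ->]; [left | right].
Qed.

Lemma flat_PGrP n (F : {set 'rV['F_2]_n}) :
  F \subset ground (PGr n) -> flat (PGr n) F <-> sum_closed F.
Proof.
move=> FG; split=> [[_ flatF] v w vF wF vw | closedF].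
  apply: contraT => vwF.
  have vwG : v + w \in ground (PGr n) by rewrite inE addmx_eq0_F2.
  have := flatF _ vwG vwF; rewrite !rk_PGr span_mx_setU1 //.
  have vw_span : ((v + w)%R <= span_mx id F)%MS.
    by apply: addmx_sub; apply: (span_mx_sup id).
  by rewrite (addsmx_idPr _) ?genmxE // ltnn.
split=> // x xG xF; rewrite !rk_PGr span_mx_setU1 //; apply: rank_ltmx.
rewrite ltmxE addsmxSr addsmx_sub genmxE sub_span_sum_closed //.
by move: xG; rewrite inE => /negPf ->; rewrite (negPf xF).
Qed.

Lemma flat_PGr_rank_lt n (F : {set 'rV['F_2]_n}) x :
  flat (PGr n) F -> x \in ground (PGr n) -> x \notin F -> (rk (PGr n) F < n)%N.
Proof. by case=> _ flatF xG xF; apply: leq_trans (flatF x xG xF) (rank_leq_col _). Qed.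

Lemma iso_restrict_PGrP (T : finType) (M : matroid T) n (A : {set 'rV['F_2]_n}) :
  iso M (restrict (PGr n) A) <->
  exists g : T -> 'rV['F_2]_n,
    [/\ represents M g, {in ground M &, injective g}
       & g @: ground M = A :&: ground (PGr n)].
Proof.
have rk_img g (X : {set T}) : X \subset ground M -> {in ground M &, injective g} ->
    rk (PGr n) (g @: X) = \rank (span_mx g X).
  move=> sXM g_inj; rewrite rk_PGr span_mx_imset // => x y /(subsetP sXM) xM.
  by move=> /(subsetP sXM); apply: g_inj.
split=> [[g [g_inj g_im rk_g]] | [g [repg g_inj g_im]]].
  by exists g; split=> // X sXM; rewrite -rk_g //; apply: rk_img.
by exists g; split=> // X sXM; rewrite repg //; apply: rk_img.
Qed.

Lemma all_si_contract_PGr_flatP (T : finType) (M : matroid T) r (g : T -> 'rV['F_2]_r.+1) :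
  represents M g -> simple M ->
  (forall e, e \in ground M -> iso (si (contract M e)) (PGr r)) <->
  flat (PGr r.+1) (ground (PGr r.+1) :\: g @: ground M).
Proof.
move=> repg simpleM.
have S0 : 0 \notin g @: ground M.
  by apply/imsetP => -[x xM /esym/eqP]; apply/negP/(represents_simple_neq0 repg simpleM xM).
apply: (iff_trans _ (iff_sym (flat_PGrP (subsetDl _ _)))).
apply: (iff_trans _ (complement_sum_closedP S0)).
split=> [cover _ /imsetP[e eM ->] | cover e eM].
  exact/(iso_si_contract_PGrP repg simpleM eM)/cover.
by apply/(iso_si_contract_PGrP repg simpleM eM)/cover/imset_f.
Qed.

Local Close Scope ring_scope.

Theorem lemma3p2 (T : finType) (M : matroid T) (r : nat) :
  is_matroid M -> binary M -> simple M -> rk M (ground M) = r.+1 ->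
  (forall e, e \in ground M -> iso (si (contract M e)) (PGr r)) <->
  (exists i, i <= r /\
     exists F, flat (PGr r.+1) F /\ rk (PGr r.+1) F = r - i /\
       iso M (restrict (PGr r.+1) (ground (PGr r.+1) :\: F))).
Proof.
move=> _ [n [f repf]] simpleM rkM; set G := ground (PGr r.+1).
split=> [all_si | [i [_ [F [flatF [_ isoM]]]]]].
  have [g repg] := represents_in_rank_dim repf rkM; set S := g @: ground M.
  have flatF := (all_si_contract_PGr_flatP repg simpleM).1 all_si.
  have [e eM] : exists e, e \in ground M.
    have [M0 | [x xM]] := set_0Vmem (ground M); last by exists x.
    by move: rkM; rewrite repg M0 // /span_mx big_set0 mxrank0.
  have geG : g e \in G by rewrite inE (represents_simple_neq0 repg simpleM eM).
  have geF : g e \notin G :\: S by rewrite inE imset_f.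
  have rkF : rk (PGr r.+1) (G :\: S) <= r := flat_PGr_rank_lt flatF geG geF.
  exists (r - rk (PGr r.+1) (G :\: S)); split; first exact: leq_subr.
  exists (G :\: S); split=> //; split; first by rewrite subKn.
  apply/iso_restrict_PGrP; exists g; split=> //; first exact: represents_simple_inj.
  rewrite setDDr setDv set0U setIC setIA setIid; apply/esym/setIidPr.
  by apply/subsetP => _ /imsetP[x xM ->]; rewrite inE (represents_simple_neq0 repg simpleM xM).
have [g [repg g_inj g_im]] := (iso_restrict_PGrP M (G :\: F)).1 isoM.
apply/(all_si_contract_PGr_flatP repg simpleM).
suff -> : G :\: g @: ground M = F by [].
by rewrite g_im setIC setIDA setIid setDDr setDv set0U; apply/setIidPr; case: flatF.
Qed.
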